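(* Let $q\ge2$, let $\delta$ be such that the matrix $\mathbf M$ with diagonal entries $1-(q-1)\delta$ and all off-diagonal entries $\delta$ is an ergodic stochastic matrix on $\{1,\dots,q\}$, so that $\lambda_2(\mathbf M)=1-q\delta$. If $b$ is a positive integer with $b\,|\lambda_2(\mathbf M)|\le1$, then the reconstruction problem for $T_b$ and $\mathbf M$ is not solvable.
   Context: Tree process on a rooted tree with root $\rho$: the root label is drawn from an initial distribution, and each non-root vertex $v$ with parent $v'$ receives label $j$ with probability $\mathbf M_{\sigma_{v'},j}$, independently across edges given parent labels. $T_b$ is the infinite rooted tree in which every vertex has exactly $b$ children. $L_n$ is the set of vertices at distance $n$ from $\rho$ and $\sigma_n=(\sigma_v)_{v\in L_n}$. With $\mathbf P_n^\ell$ the conditional law of $\sigma_n$ given $\sigma_\rho=\ell$ and $D_V(P,Q)=\frac12\sum|P-Q|$, the reconstruction problem is solvable if there exist $i,j$ with $\lim_n D_V(\mathbf P_n^i,\mathbf P_n^j)>0$. *)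

From HB Require Import structures.
From mathcomp Require Import all_boot all_order all_algebra.
From mathcomp Require Import all_classical all_reals all_analysis.
Set Implicit Arguments. Unset Strict Implicit. Unset Printing Implicit Defensive.
Import Order.TTheory GRing.Theory Num.Theory.
Import numFieldNormedType.Exports.
Local Open Scope ring_scope.

(* States are 'I_q (i.e. {0,...,q-1}, standing for {1,...,q}). *)

Definition stochastic (R : realType) (q : nat) (M : 'M[R]_q) : Prop :=
  (forall i j, 0 <= M i j) /\ (forall i, \sum_(j < q) M i j = 1).

Definition mxpow (R : realType) (q : nat) (M : 'M[R]_q) (k : nat) : 'M[R]_q :=
  iter k (fun A => A *m M) 1%:M.

(* Ergodic (irreducible and aperiodic) finite chain = some power has all
   entries positive. *)
Definition ergodic_stochastic (R : realType) (q : nat) (M : 'M[R]_q) : Prop :=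
  stochastic M /\ exists k, forall i j, 0 < mxpow M k i j.

(* Vertices of T_b at depth <= n: a vertex at depth k is the word in 'I_b
   (children chosen) of length k leading from the root rho (empty word). *)
Definition vtx (b n : nat) := {k : 'I_n.+1 & k.-tuple 'I_b}.
Definition word (b n : nat) (v : vtx b n) : seq 'I_b := val (tagged v).

Definition is_parent (b n : nat) (u v : vtx b n) : bool :=
  (size (word v) == (size (word u)).+1) &&
  (word u == take (size (word u)) (word v)).

Definition edge_weight (R : realType) (q b n : nat) (M : 'M[R]_q)
  (tau : {ffun vtx b n -> 'I_q}) : R :=
  \prod_(u : vtx b n) \prod_(v : vtx b n | is_parent u v) M (tau u) (tau v).

Definition root_is (q b n : nat) (tau : {ffun vtx b n -> 'I_q}) (l : 'I_q) : bool :=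
  [forall v : vtx b n, (size (word v) == 0%N) ==> (tau v == l)].

(* sigma : L_n -> 'I_q, with L_n indexed by n-tuples over 'I_b *)
Definition level_is (q b n : nat) (tau : {ffun vtx b n -> 'I_q})
  (sigma : {ffun n.-tuple 'I_b -> 'I_q}) : bool :=
  [forall v : vtx b n, forall t : n.-tuple 'I_b,
     (word v == val t) ==> (tau v == sigma t)].

(* P_n^l(sigma) : conditional law of sigma_n given sigma_rho = l,
   obtained by marginalising the tree process on the vertices of depth <= n. *)
Definition Pn (R : realType) (q b : nat) (M : 'M[R]_q) (n : nat) (l : 'I_q)
  (sigma : {ffun n.-tuple 'I_b -> 'I_q}) : R :=
  \sum_(tau : {ffun vtx b n -> 'I_q} | root_is tau l && level_is tau sigma)
     edge_weight M tau.

Definition DV (R : realType) (T : finType) (P Q : T -> R) : R :=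
  2^-1 * \sum_(x : T) `|P x - Q x|.

Definition reconstruction_solvable (R : realType) (q b : nat) (M : 'M[R]_q) : Prop :=
  exists i j : 'I_q,
    0 < limn (fun n : nat => DV (@Pn R q b M n i) (@Pn R q b M n j)).

From HB Require Import structures.
From mathcomp Require Import all_boot all_order all_algebra.
From mathcomp Require Import all_classical all_reals all_analysis.
From mathcomp Require Import ring lra.
Import Order.TTheory GRing.Theory Num.Theory.
Local Open Scope ring_scope.
Set Implicit Arguments. Unset Strict Implicit.

(* Conditioned on its root label l, the configuration at depth n+1 consists
   of b independent copies of depth-n configurations, each started from a
   label drawn from the row M l.  For the Potts channel two rows differ by
   lambda (e_i - e_j) with lambda = 1 - q delta, so passing through M scales
   total variation by |lambda|, and the overlap of two distributions at
   distance d gives product measures at distance at most 1 - (1 - d)^b.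
   Hence x_n = D_V(P_n^i, P_n^j) satisfies
   x_(n+1) <= 1 - (1 - |lambda| x_n)^b <= x_n - C x_n^2, where C > 0 because
   b |lambda| <= 1 and |lambda| < 1 (ergodicity excludes delta = 0 and the
   swap chain), so x_n tends to 0. *)

Lemma big_option (R : Type) (idx : R) (op : Monoid.com_law idx) (T : finType)
  (F : option T -> R) :
  \big[op/idx]_(o : option T) F o = op (F None) (\big[op/idx]_(t : T) F (Some t)).
Proof.
rewrite (bigD1 None) //=; congr (op _ _).
rewrite (reindex_omap Some id) /=; last by case.
by apply: eq_bigl => t; rewrite eqxx.
Qed.

Lemma big_pair (R : Type) (idx : R) (op : Monoid.com_law idx) (I J : finType)
  (G : I * J -> R) :
  \big[op/idx]_(p : I * J) G p = \big[op/idx]_(i : I) \big[op/idx]_(j : J) G (i, j).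
Proof. by rewrite pair_bigA; apply: eq_bigr => -[]. Qed.

Section Vertices.
Variable b : nat.

Definition rootv (n : nat) : vtx b n :=
  existT (fun k : 'I_n.+1 => k.-tuple 'I_b) ord0 [tuple].

Lemma size_word n (v : vtx b n) : size (word v) = tag v.
Proof. by case: v => k t; rewrite /word /= size_tuple. Qed.

Lemma size_word_le n (v : vtx b n) : (size (word v) <= n)%N.
Proof. by rewrite size_word -ltnS ltn_ord. Qed.

Lemma word_inj n : injective (@word b n).
Proof.
move=> [k t] [k' t'] /= e.
have ek : k = k'.
  by apply/val_inj; rewrite /= -(size_tuple t) -(size_tuple t') (congr1 size e).
by subst k'; have -> : t = t' by apply/val_inj.
Qed.

Lemma size_word_eq0 n (v : vtx b n) : (size (word v) == 0%N) = (v == rootv n).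
Proof.
apply/idP/eqP => [/eqP/size0nil e|->//].
by apply: word_inj; rewrite e.
Qed.

(* Words that are too long are sent to the root. *)
Definition mkv n (w : seq 'I_b) : vtx b n :=
  if (size w < n.+1)%N =P true is ReflectT h then
    existT (fun k : 'I_n.+1 => k.-tuple 'I_b) (Ordinal h) (@Tuple (size w) _ w (eqxx _))
  else rootv n.

Lemma word_mkv n w : (size w <= n)%N -> word (mkv n w) = w.
Proof. by move=> hw; rewrite /mkv; case: eqP => //; rewrite ltnS hw. Qed.

Lemma mkv_word n (v : vtx b n) : mkv n (word v) = v.
Proof. by apply: word_inj; rewrite word_mkv // size_word_le. Qed.

(* A vertex of depth at most n+1 is the root or a vertex of depth at most n
   of the subtree hanging from some child c of the root. *)
Definition vtxS n (x : option ('I_b * vtx b n)) : vtx b n.+1 :=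
  if x is Some (c, v) then mkv n.+1 (c :: word v) else rootv n.+1.

Definition vtxS_inv n (u : vtx b n.+1) : option ('I_b * vtx b n) :=
  if word u is c :: w then Some (c, mkv n w) else None.

Arguments vtxS : clear implicits.
Arguments vtxS_inv : clear implicits.
Arguments vtxS : simpl never.

Lemma vtxS_None n : vtxS n None = rootv n.+1.
Proof. by []. Qed.

Lemma word_vtxS n c v : word (vtxS n (Some (c, v))) = c :: word v.
Proof. by rewrite word_mkv //= ltnS size_word_le. Qed.

Lemma vtxS_invK n : cancel (vtxS_inv n) (vtxS n).
Proof.
move=> u; rewrite /vtxS_inv; case E: (word u) => [|c w].
  by rewrite vtxS_None; apply/esym/eqP; rewrite -size_word_eq0 E.
apply: word_inj; rewrite word_vtxS E word_mkv //.
by have := size_word_le u; rewrite E.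
Qed.

Lemma vtxSK n : cancel (vtxS n) (vtxS_inv n).
Proof. by case=> [[c v]|]; rewrite /vtxS_inv ?word_vtxS ?mkv_word. Qed.

Lemma vtxS_bij n : bijective (vtxS n).
Proof. by exists (vtxS_inv n); [exact: vtxSK | exact: vtxS_invK]. Qed.

Lemma is_parent_vtxS n x y :
  is_parent (vtxS n x) (vtxS n y) =
  match x, y with
  | None, Some (c, v) => v == rootv n
  | Some (c, u), Some (c', v) => (c == c') && is_parent u v
  | _, None => false
  end.
Proof.
rewrite /is_parent; case: x => [[c u]|]; case: y => [[c' v]|];
  rewrite ?vtxS_None ?word_vtxS //=.
- by rewrite eqSS eqseq_cons andbCA.
- by rewrite andbT eqSS size_word_eq0.
Qed.

Lemma root_isE q n (tau : {ffun vtx b n -> 'I_q}) l :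
  root_is tau l = (tau (rootv n) == l).
Proof.
apply/forallP/eqP => [H|H v].
  by have /implyP/(_ (eqxx _))/eqP := H (rootv n).
by apply/implyP; rewrite size_word_eq0 => /eqP ->; apply/eqP.
Qed.

Lemma level_isE q n (tau : {ffun vtx b n -> 'I_q}) sigma :
  level_is tau sigma = [forall t : n.-tuple 'I_b, tau (mkv n t) == sigma t].
Proof.
apply/forallP/forallP => [H t|H v].
  by have /forallP/(_ t) := H (mkv n t); rewrite word_mkv ?size_tuple // eqxx.
apply/forallP => t; apply/implyP => /eqP e.
by rewrite -(mkv_word v) e; exact: H.
Qed.

Lemma mkvS n c (t : seq 'I_b) : (size t <= n)%N ->
  mkv n.+1 (c :: t) = vtxS n (Some (c, mkv n t)).
Proof. by move=> ht; apply: word_inj; rewrite word_vtxS !word_mkv. Qed.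

End Vertices.

Arguments rootv {b} n.
Arguments vtxS {b} n x : simpl never.
Arguments vtxS_inv {b} n u.

Definition channel (R : realType) (q : nat) (T : Type) (M : 'M[R]_q)
  (P : 'I_q -> T -> R) (l : 'I_q) (t : T) : R :=
  \sum_k M l k * P k t.

Lemma channel_ge0 (R : realType) (q : nat) (T : Type) (M : 'M[R]_q) P l (t : T) :
  (forall i j, 0 <= M i j) -> (forall k, 0 <= P k t) -> 0 <= channel M P l t.
Proof. by move=> M0 P0; apply: sumr_ge0 => k _; rewrite mulr_ge0. Qed.

Lemma sum_channel (R : realType) (q : nat) (T : finType) (M : 'M[R]_q) P l :
  \sum_(j < q) M l j = 1 -> (forall k, \sum_(t : T) P k t = 1) ->
  \sum_t channel M P l t = 1.
Proof.
move=> M1 P1; rewrite exchange_big /= -M1; apply: eq_bigr => k _.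
by rewrite -mulr_sumr P1 mulr1.
Qed.

Section TreeProcess.
Variables (b : nat) (R : realType) (q : nat) (M : 'M[R]_q).

Lemma edge_weightS n (tau : {ffun vtx b n.+1 -> 'I_q}) :
  edge_weight M tau = \prod_(c < b)
    (M (tau (rootv n.+1)) (tau (vtxS n (Some (c, rootv n)))) *
     edge_weight M [ffun v => tau (vtxS n (Some (c, v)))]).
Proof.
have bij := @vtxS_bij b n.
have reindex_children x :
  \prod_(v | is_parent (vtxS n x) v) M (tau (vtxS n x)) (tau v) =
  \prod_(y : option ('I_b * vtx b n))
    (if is_parent (vtxS n x) (vtxS n y) then M (tau (vtxS n x)) (tau (vtxS n y)) else 1).
  by rewrite (reindex (vtxS n) (onW_bij _ bij)) big_mkcond.
rewrite /edge_weight (reindex (vtxS n) (onW_bij _ bij)) big_option big_pair.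
rewrite reindex_children big_option big_pair /= mul1r -big_split /=.
apply: eq_bigr => c _; congr (_ * _).
  rewrite (bigD1 (rootv n)) //= is_parent_vtxS eqxx big1 ?mulr1 ?vtxS_None //.
  by move=> v /negPf; rewrite -vtxS_None is_parent_vtxS => ->.
apply: eq_bigr => u _; rewrite reindex_children big_option big_pair /=.
rewrite mul1r (bigD1 c) //= [X in _ * X]big1 ?mulr1; last first.
  move=> c' /negPf; rewrite eq_sym => Hc; apply: big1 => v _.
  by rewrite is_parent_vtxS Hc.
rewrite [RHS]big_mkcond /=; apply: eq_bigr => v _.
by rewrite is_parent_vtxS eqxx /= !ffunE.
Qed.

Definition join_labels n (p : 'I_q * {ffun 'I_b -> {ffun vtx b n -> 'I_q}}) :
  {ffun vtx b n.+1 -> 'I_q} :=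
  [ffun u => if vtxS_inv n u is Some (c, v) then p.2 c v else p.1].

Definition split_labels n (tau : {ffun vtx b n.+1 -> 'I_q}) :
  'I_q * {ffun 'I_b -> {ffun vtx b n -> 'I_q}} :=
  (tau (rootv n.+1), [ffun c => [ffun v => tau (vtxS n (Some (c, v)))]]).

Lemma join_labels_bij n : bijective (@join_labels n).
Proof.
exists (@split_labels n).
  case=> r h; rewrite /split_labels !ffunE -vtxS_None vtxSK /=; congr (_, _).
  by apply/ffunP => c; rewrite ffunE; apply/ffunP => v; rewrite !ffunE vtxSK.
move=> tau; apply/ffunP => u; rewrite !ffunE.
by case E: (vtxS_inv n u) => [[c v]|]; rewrite /= ?ffunE -?vtxS_None -E vtxS_invK.
Qed.

Lemma join_labels_root n p : join_labels p (rootv n.+1) = p.1.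
Proof. by rewrite -vtxS_None ffunE vtxSK. Qed.

Lemma join_labels_vtxS n p c v : join_labels p (vtxS n (Some (c, v))) = p.2 c v.
Proof. by rewrite ffunE vtxSK. Qed.

Lemma edge_weight_join n p :
  edge_weight M (join_labels p) =
  \prod_(c < b) (M p.1 (p.2 c (rootv n)) * edge_weight M (p.2 c)).
Proof.
rewrite edge_weightS join_labels_root; apply: eq_bigr => c _.
rewrite join_labels_vtxS; congr (_ * edge_weight M _).
by apply/ffunP => v; rewrite !ffunE vtxSK.
Qed.

Definition subconf n (sigma : {ffun n.+1.-tuple 'I_b -> 'I_q}) (c : 'I_b) :
  {ffun n.-tuple 'I_b -> 'I_q} := [ffun t : n.-tuple 'I_b => sigma [tuple of c :: t]].

Definition join_conf n (s : {ffun 'I_b -> {ffun n.-tuple 'I_b -> 'I_q}}) :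
  {ffun n.+1.-tuple 'I_b -> 'I_q} :=
  [ffun t : n.+1.-tuple 'I_b => s (thead t) [tuple of behead t]].

Lemma subconf_join n s c : subconf (@join_conf n s) c = s c.
Proof. by apply/ffunP => t; rewrite !ffunE /=; congr (s _ _); apply/val_inj. Qed.

Lemma join_conf_bij n : bijective (@join_conf n).
Proof.
exists (fun sigma => [ffun c => subconf sigma c]).
  by move=> s; apply/ffunP => c; rewrite ffunE subconf_join.
by move=> sigma; apply/ffunP => t; rewrite !ffunE [in RHS](tuple_eta t).
Qed.

Lemma sum_join_conf n (F : {ffun n.+1.-tuple 'I_b -> 'I_q} -> R) :
  \sum_sigma F sigma = \sum_s F (@join_conf n s).
Proof. by rewrite (reindex (@join_conf n) (onW_bij _ (@join_conf_bij n))). Qed.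

Lemma level_is_join n (p : 'I_q * {ffun 'I_b -> {ffun vtx b n -> 'I_q}}) sigma :
  level_is (join_labels p) sigma = [forall c, level_is (p.2 c) (subconf sigma c)].
Proof.
rewrite level_isE; apply/forallP/forallP => [H c|H t].
  rewrite level_isE; apply/forallP => t; rewrite ffunE.
  by have := H [tuple of c :: t]; rewrite /= mkvS ?size_tuple // join_labels_vtxS.
rewrite [t]tuple_eta /= mkvS ?size_tuple // join_labels_vtxS.
have := H (thead t); rewrite level_isE => /forallP/(_ [tuple of behead t]).
by rewrite ffunE.
Qed.

Lemma PnS n l (sigma : {ffun n.+1.-tuple 'I_b -> 'I_q}) :
  Pn M l sigma = \prod_(c < b) channel M (@Pn R q b M n) l (subconf sigma c).
Proof.
rewrite /Pn (reindex (@join_labels n) (onW_bij _ (@join_labels_bij n))) /=.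
rewrite big_mkcond big_pair /= (bigD1 l) //= [X in _ + X]big1 ?addr0; last first.
  move=> r /negPf Hr; apply: big1 => h _.
  by rewrite root_isE join_labels_root /= Hr.
under eq_bigr => h _ do
  rewrite root_isE join_labels_root eqxx /= level_is_join edge_weight_join /=.
pose F c (g : {ffun vtx b n -> 'I_q}) :=
  if level_is g (subconf sigma c) then M l (g (rootv n)) * edge_weight M g else 0.
have prod_ifE (h : {ffun 'I_b -> {ffun vtx b n -> 'I_q}}) :
    (if [forall c, level_is (h c) (subconf sigma c)]
     then \prod_(c < b) (M l (h c (rootv n)) * edge_weight M (h c)) else 0) =
    \prod_(c < b) F c (h c).
  case: forallP => H; first by apply: eq_bigr => c _; rewrite /F H.
  have [c Hc] : exists c, ~~ level_is (h c) (subconf sigma c).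
    by apply/existsP; rewrite -negb_forall; apply/forallP.
  by rewrite (bigD1 c) //= /F (negPf Hc) mul0r.
rewrite (eq_bigr _ (fun h _ => prod_ifE h)) -(bigA_distr_bigA F).
apply: eq_bigr => c _; rewrite /channel.
under [RHS]eq_bigr => k _ do rewrite big_mkcond mulr_sumr.
rewrite exchange_big /=; apply: eq_bigr => g _.
rewrite (bigD1 (g (rootv n))) //= root_isE eqxx /= big1 ?addr0.
  by rewrite /F; case: ifP; rewrite ?mulr0.
by move=> k; rewrite root_isE eq_sym => /negPf ->; rewrite mulr0.
Qed.

Hypothesis M_ge0 : forall i j, 0 <= M i j.

Lemma Pn_ge0 n l sigma : 0 <= Pn M (b := b) (n := n) l sigma.
Proof. by apply: sumr_ge0 => tau _; do 2 apply: prodr_ge0 => ? _. Qed.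

Lemma sum_Pn0 l : \sum_sigma Pn M (b := b) (n := 0) l sigma = 1.
Proof.
rewrite /Pn; under eq_bigr => s _ do rewrite big_mkcond.
rewrite exchange_big /=.
have vtx0_root (v : vtx b 0) : v = rootv 0.
  by apply/eqP; rewrite -size_word_eq0 -leqn0 size_word_le.
pose leaves (tau : {ffun vtx b 0 -> 'I_q}) : {ffun 0.-tuple 'I_b -> 'I_q} :=
  [ffun t : 0.-tuple 'I_b => tau (mkv 0 t)].
have level_isE0 tau sigma : level_is tau sigma = (sigma == leaves tau).
  rewrite level_isE; apply/forallP/eqP => [H|-> t]; last by rewrite ffunE.
  by apply/ffunP => t; rewrite ffunE (eqP (H t)).
have edge_weight0 (tau : {ffun vtx b 0 -> 'I_q}) : edge_weight M tau = 1.
  apply: big1 => u _; apply: big1 => v; rewrite /is_parent.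
  by rewrite (vtx0_root u) (vtx0_root v).
under eq_bigr => tau _.
  rewrite (bigD1 (leaves tau)) //= root_isE level_isE0 eqxx andbT big1; last first.
    by move=> s /negPf; rewrite level_isE0 => ->; rewrite andbF.
  rewrite edge_weight0 addr0.
over.
have const_bij : bijective (fun x : 'I_q => [ffun _ : vtx b 0 => x]).
  exists (fun tau : {ffun vtx b 0 -> 'I_q} => tau (rootv 0)) => [x|tau].
    by rewrite ffunE.
  by apply/ffunP => v; rewrite !ffunE (vtx0_root v).
rewrite (reindex _ (onW_bij _ const_bij)) /= (bigD1 l) //= ffunE eqxx big1 ?addr0 //.
by move=> x /negPf; rewrite ffunE => ->.
Qed.

Hypothesis M_row1 : forall i, \sum_(j < q) M i j = 1.

Lemma sum_Pn n l : \sum_sigma Pn M (b := b) (n := n) l sigma = 1.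
Proof.
elim: n l => [|n IH] l; first exact: sum_Pn0.
rewrite sum_join_conf.
under eq_bigr => s _ do rewrite PnS.
under eq_bigr => s _ do under eq_bigr => c _ do rewrite subconf_join.
rewrite -(bigA_distr_bigA (fun c => channel M (@Pn R q b M n) l)) /=.
by rewrite big1 // => c _; apply: sum_channel.
Qed.

End TreeProcess.

Section TotalVariation.
Variables (R : realType) (T : finType) (mu nu : T -> R).
Hypotheses (mu_ge0 : forall x, 0 <= mu x) (nu_ge0 : forall x, 0 <= nu x).
Hypotheses (mu_sum1 : \sum_x mu x = 1) (nu_sum1 : \sum_x nu x = 1).

Lemma DV_ge0 : 0 <= DV mu nu.
Proof. by apply: mulr_ge0; [rewrite invr_ge0 | apply: sumr_ge0]. Qed.

Lemma DV_le1 : DV mu nu <= 1.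
Proof.
have : \sum_x `|mu x - nu x| <= \sum_x (mu x + nu x).
  by apply: ler_sum => x _; rewrite (le_trans (ler_normB _ _)) // !ger0_norm.
by rewrite big_split /= mu_sum1 nu_sum1 /DV; lra.
Qed.

Lemma sum_min_DV : \sum_x Num.min (mu x) (nu x) = 1 - DV mu nu.
Proof.
have minE a c : Num.min a c = 2^-1 * (a + c - `|a - c|) :> R.
  by case: lerP => h; lra.
under eq_bigr => x _ do rewrite minE.
by rewrite -mulr_sumr !sumrB big_split /= mu_sum1 nu_sum1 /DV; lra.
Qed.

(* Coupling bound: the overlap [min mu nu] of the marginals yields an overlap
   of mass [(1 - DV mu nu) ^+ b] for the product measures. *)
Lemma DV_prod_le b :
  DV (fun s : {ffun 'I_b -> T} => \prod_(c < b) mu (s c))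
     (fun s : {ffun 'I_b -> T} => \prod_(c < b) nu (s c)) <= 1 - (1 - DV mu nu) ^+ b.
Proof.
pose m x := Num.min (mu x) (nu x).
have sum_prod (f : T -> R) :
    \sum_(s : {ffun 'I_b -> T}) \prod_(c < b) f (s c) = (\sum_x f x) ^+ b.
  by rewrite -(bigA_distr_bigA (fun _ x => f x)) prodr_const card_ord.
have le_prod (f : T -> R) : (forall x, m x <= f x) ->
    forall s : {ffun 'I_b -> T}, \prod_(c < b) m (s c) <= \prod_(c < b) f (s c).
  move=> mf s; apply: ler_prod => c _.
  by rewrite le_min mu_ge0 nu_ge0 mf.
have m_mu x : m x <= mu x by rewrite ge_min lexx.
have m_nu x : m x <= nu x by rewrite ge_min lexx orbT.
have : \sum_(s : {ffun 'I_b -> T}) `|\prod_(c < b) mu (s c) - \prod_(c < b) nu (s c)| <=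
    \sum_(s : {ffun 'I_b -> T})
      ((\prod_(c < b) mu (s c) - \prod_(c < b) m (s c)) +
       (\prod_(c < b) nu (s c) - \prod_(c < b) m (s c))).
  apply: ler_sum => s _; have := le_prod _ m_mu s; have := le_prod _ m_nu s.
  by move=> h1 h2; rewrite ler_norml; apply/andP; split; lra.
rewrite big_split /= !sumrB !sum_prod mu_sum1 nu_sum1 sum_min_DV !expr1n /DV; lra.
Qed.

End TotalVariation.

Lemma DV_channel (R : realType) (q : nat) (T : finType) (M : 'M[R]_q)
  (P : 'I_q -> T -> R) (lam : R) i j :
  (forall k, M i k - M j k = lam * ((i == k)%:R - (j == k)%:R)) ->
  DV (channel M P i) (channel M P j) = `|lam| * DV (P i) (P j).
Proof.
move=> rowB; rewrite /DV [RHS]mulrCA; congr (_ * _).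
rewrite mulr_sumr; apply: eq_bigr => t _.
have delta_sum (l : 'I_q) : \sum_k (l == k)%:R * P k t = P l t.
  rewrite (bigD1 l) //= eqxx mul1r big1 ?addr0 // => k.
  by rewrite eq_sym => /negPf ->; rewrite mul0r.
rewrite /channel -sumrB -normrM; congr `|_|.
under eq_bigr => k _ do rewrite -mulrBl rowB -mulrA mulrBl.
by rewrite -mulr_sumr sumrB !delta_sum.
Qed.

Lemma one_sub_exprS_le (R : realFieldType) (u : R) (b : nat) : 0 <= u <= 1 ->
  1 - u ^+ b.+1 <= (1 - u) * (1 + b%:R * u).
Proof.
move=> /andP[u0 u1]; elim: b => [|b IH]; first by rewrite expr1 mul0r addr0 mulr1.
have uS_le : u ^+ b.+1 * (1 - u) <= u * (1 - u).
  by apply: ler_wpM2r; [lra | rewrite exprS ler_piMr // exprn_ile1].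
have -> : 1 - u ^+ b.+2 = (1 - u ^+ b.+1) + u ^+ b.+1 * (1 - u).
  by rewrite exprSr; ring.
rewrite -natr1; nra.
Qed.

Definition decay_rate (R : ringType) (a : R) (b : nat) : R :=
  (1 - b%:R * a) + a ^+ 2 * b.-1%:R.

(* When [b * a = 1] the rate is [a ^+ 2 * b.-1], positive since [a < 1]
   forces [b > 1]. *)
Lemma decay_rate_gt0 (R : realFieldType) (a : R) (b : nat) :
  0 <= a -> a < 1 -> b%:R * a <= 1 -> 0 < decay_rate a b.
Proof.
rewrite /decay_rate => a0 a1 ab; have a2b : 0 <= a ^+ 2 * b.-1%:R.
  by rewrite mulr_ge0 ?sqr_ge0.
have [ab1|abge] := ltrP (b%:R * a) 1; first lra.
case: b => [|[|b]] in ab a2b abge *; [lra | rewrite mul1r in abge; lra |].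
have ap : 0 < a by rewrite lt0r a0 andbT; apply: contraTneq abge => ->; lra.
by rewrite (_ : b.+2%:R * a = 1) ?subrr ?add0r ?mulr_gt0 ?exprn_gt0 //; lra.
Qed.

Lemma one_sub_expr_le_decay (R : realFieldType) (a x : R) (b : nat) :
  (0 < b)%N -> 0 <= a -> a < 1 -> b%:R * a <= 1 -> 0 <= x <= 1 ->
  1 - (1 - a * x) ^+ b <= x - decay_rate a b * x ^+ 2.
Proof.
case: b => // b _ a0 a1 ab /andP[x0 x1].
have ax : 0 <= 1 - a * x <= 1 by apply/andP; split; nra.
apply: le_trans (one_sub_exprS_le b ax) _.
rewrite /decay_rate -natr1 in ab *.
have : (1 - (b%:R + 1) * a) * x ^+ 2 <= (1 - (b%:R + 1) * a) * x.
  by apply: ler_wpM2l; [lra | rewrite expr2 ler_piMr].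
rewrite !expr2; have b0 : 0 <= (b%:R : R) := ler0n _ _; nra.
Qed.

Lemma quadratic_decay (R : realType) (C : R) (x : nat -> R) :
  0 < C -> (forall n, 0 <= x n) -> (forall n, x n.+1 <= x n - C * x n ^+ 2) ->
  (x n @[n --> \oo] --> 0)%classic.
Proof.
move=> C0 x0 xS.
have x_nonincr n : x n.+1 <= x n.
  by have := xS n; have := mulr_ge0 (ltW C0) (sqr_ge0 (x n)); lra.
apply/cvgrPdist_lt => e e0.
have Ce : 0 < C * e ^+ 2 by rewrite mulr_gt0 ?exprn_gt0.
have small_or_low n : x n < e \/ x n <= x 0%N - n%:R * (C * e ^+ 2).
  elim: n => [|n [IH|IH]]; first by right; rewrite mul0r subr0.
    by left; apply: le_lt_trans (x_nonincr n) IH.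
  have [xe|ex] := ltrP (x n) e; first by left; apply: le_lt_trans (x_nonincr n) xe.
  right; apply: le_trans (xS n) _.
  have : C * e ^+ 2 <= C * x n ^+ 2.
    by rewrite ler_pM2l // lerXn2r ?nnegrE ?(ltW e0) ?x0.
  rewrite -natr1; lra.
pose N := Num.bound (x 0%N / (C * e ^+ 2)).
have hN : x 0%N / (C * e ^+ 2) < N%:R.
  by apply: archi_boundP; rewrite divr_ge0 ?x0 ?ltW.
exists N => // n /= Nn; rewrite sub0r normrN ger0_norm //.
have [//|low] := small_or_low n.
have : x 0%N < n%:R * (C * e ^+ 2).
  by rewrite -ltr_pdivrMr //; apply: lt_le_trans hN _; rewrite ler_nat.
have := x0 n; lra.
Qed.

Section Potts.
Variables (R : realType) (q b : nat) (delta : R) (M : 'M[R]_q).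
Hypothesis M_potts : forall i j : 'I_q,
  M i j = if i == j then 1 - (q%:R - 1) * delta else delta.
Hypothesis M_stochastic : stochastic M.

Local Notation lam := (1 - q%:R * delta).

Lemma potts_rowB i j k : M i k - M j k = lam * ((i == k)%:R - (j == k)%:R).
Proof. by rewrite !M_potts; case: (i == k); case: (j == k) => /=; ring. Qed.

Lemma DV_PnS n i j :
  DV (@Pn R q b M n.+1 i) (@Pn R q b M n.+1 j) <=
  1 - (1 - `|lam| * DV (@Pn R q b M n i) (@Pn R q b M n j)) ^+ b.
Proof.
have [M_ge0 M_row1] := M_stochastic.
pose P k := @Pn R q b M n k.
have P_ge0 l t : 0 <= channel M P l t.
  by apply: channel_ge0 => // k; exact: Pn_ge0.
have P_sum1 l : \sum_t channel M P l t = 1.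
  by apply: sum_channel => // k; exact: sum_Pn.
have -> : DV (@Pn R q b M n.+1 i) (@Pn R q b M n.+1 j) =
    DV (fun s : {ffun 'I_b -> _} => \prod_(c < b) channel M P i (s c))
       (fun s : {ffun 'I_b -> _} => \prod_(c < b) channel M P j (s c)).
  rewrite /DV sum_join_conf; congr (_ * _); apply: eq_bigr => s _.
  by rewrite !PnS; under eq_bigr do rewrite subconf_join;
     under [X in _ - X]eq_bigr do rewrite subconf_join.
rewrite -(DV_channel P (potts_rowB i j)).
exact: DV_prod_le.
Qed.

Lemma DV_Pn_cvg0 i j : (0 < b)%N -> b%:R * `|lam| <= 1 -> `|lam| < 1 ->
  (DV (@Pn R q b M n i) (@Pn R q b M n j) @[n --> \oo] --> 0)%classic.
Proof.
move=> b0 blam lam_lt1.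
have [M_ge0 M_row1] := M_stochastic.
have DV01 n : 0 <= DV (@Pn R q b M n i) (@Pn R q b M n j) <= 1.
  by apply/andP; split; [exact: DV_ge0 | apply: DV_le1 => *;
    [exact: Pn_ge0 | exact: Pn_ge0 | exact: sum_Pn | exact: sum_Pn]].
apply: (quadratic_decay (decay_rate_gt0 (normr_ge0 lam) lam_lt1 blam)).
  by move=> n; case/andP: (DV01 n).
move=> n; apply: le_trans (DV_PnS n i j) _.
exact: one_sub_expr_le_decay b0 (normr_ge0 lam) lam_lt1 blam (DV01 n).
Qed.

End Potts.

Lemma mxpow1 (R : realType) (q k : nat) : mxpow (1%:M : 'M[R]_q) k = 1%:M.
Proof. by elim: k => //= k IH; rewrite /mxpow /= -/(mxpow _ k) IH mulmx1. Qed.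

Lemma mxpow_swap (R : realType) (M : 'M[R]_2) :
  (forall i j, M i j = (i != j)%:R) ->
  forall k, mxpow M k = if odd k then M else 1%:M.
Proof.
move=> M_swap; have MM : M *m M = 1%:M.
  apply/matrixP => i j; rewrite !mxE !big_ord_recr big_ord0 /= !M_swap.
  by case: i => [[|[|?]] ?] //; case: j => [[|[|?]] ?] //=;
     rewrite ?mul0r ?mulr0 ?mul1r ?add0r ?addr0.
elim=> [|k IH] //; rewrite /mxpow /= -/(mxpow _ k) IH.
by case: (odd k); rewrite ?MM ?mul1mx.
Qed.

Lemma potts_ergodic_lambda_lt1 (R : realType) (q : nat) (delta : R) (M : 'M[R]_q) :
  (2 <= q)%N ->
  (forall i j : 'I_q, M i j = if i == j then 1 - (q%:R - 1) * delta else delta) ->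
  ergodic_stochastic M -> `|1 - q%:R * delta| < 1.
Proof.
move=> hq M_potts [[M_ge0 _] [k Mk_gt0]].
pose i0 : 'I_q := Ordinal (ltnW hq); pose i1 : 'I_q := Ordinal hq.
have d0 : 0 <= delta by have := M_ge0 i0 i1; rewrite M_potts.
have d1 : 0 <= 1 - (q%:R - 1) * delta by have := M_ge0 i0 i0; rewrite M_potts eqxx.
have q2 : 2 <= (q%:R : R) by rewrite ler_nat.
have d_gt0 : 0 < delta.
  rewrite lt0r d0 andbT; apply: contra_ltN (Mk_gt0 i0 i1) => /eqP d_eq0.
  have -> : M = 1%:M.
    by apply/matrixP => i j; rewrite M_potts mxE d_eq0 mulr0 subr0; case: (i == j).
  by rewrite mxpow1 mxE.
have d1_le : delta <= 1 by nra.
rewrite ltr_norml; apply/andP; split; last by nra.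
have [//|qd2] := ltrP (-1) (1 - q%:R * delta).
(* [q delta = 2] forces [q = 2] and [delta = 1]: [M] swaps the two states. *)
have d_eq1 : delta = 1 by nra.
have q_eq2 : q = 2%N by apply/eqP; rewrite eqn_leq hq andbT -(ler_nat R); nra.
subst q; have M_swap i j : M i j = (i != j)%:R.
  by rewrite M_potts d_eq1; case: (i == j) => //=; lra.
have := Mk_gt0 i0 i0; have := Mk_gt0 i0 i1.
by rewrite mxpow_swap //; case: (odd k); rewrite /= ?mxE ?M_swap /= ?ltxx.
Qed.

Theorem mainTheorem4 (R : realType) (q b : nat) (delta : R) (M : 'M[R]_q) :
  (2 <= q)%N ->
  (forall i j : 'I_q, M i j = if i == j then 1 - (q%:R - 1) * delta else delta) ->
  ergodic_stochastic M ->
  (0 < b)%N ->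
  b%:R * `|1 - q%:R * delta| <= 1 ->
  ~ reconstruction_solvable b M.
Proof.
move=> hq M_potts M_ergodic b_gt0 blam [i [j DV_lim_gt0]].
have lam_lt1 := potts_ergodic_lambda_lt1 hq M_potts M_ergodic.
have := DV_Pn_cvg0 M_potts M_ergodic.1 i j b_gt0 blam lam_lt1.
by move/(cvg_lim (@norm_hausdorff _ _)) => DV_lim0; rewrite DV_lim0 ltxx in DV_lim_gt0.
Qed.
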